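(* Assume $k_{+\infty}=k_{-\infty}=:k_\infty$. For every twice continuously differentiable $J:\mathbb{R}\to(0,\infty)$ with $J(x)\to1$ as $x\to\pm\infty$, $$T\ \ge\ \mathrm{sech}^2\left\{\frac12\int_{-\infty}^{\infty}\left|\frac{J^2}{k_\infty}\left\{k^2+\frac{J''}{J}\right\}-\frac{k_\infty}{J^2}\right|\mathrm{d}x\right\}.$$
   Context: Standing setup: $k^2:\mathbb{R}\to\mathbb{R}$ is a piecewise continuous function (it may be negative somewhere) with $k^2(x)\to k_{\pm\infty}^2$ as $x\to\pm\infty$, where $k_{\pm\infty}>0$ and $k^2-k_{\pm\infty}^2$ is integrable near $\pm\infty$. For the equation $u''+k^2(x)u=0$ there is a solution with $u(x)=e^{ik_{-\infty}x}+r\,e^{-ik_{-\infty}x}+o(1)$ as $x\to-\infty$ and $u(x)=\tau\,e^{ik_{+\infty}x}+o(1)$ as $x\to+\infty$; the transmission probability is $T=(k_{+\infty}/k_{-\infty})|\tau|^2$. Here $\mathrm{sech}=1/\cosh$, and if the integral equals $+\infty$ the bound is read as the trivial statement $T\ge 0$. *)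

From Stdlib Require Import Reals Lra.
Open Scope R_scope.

Definition lim_pinf (f : R -> R) (l : R) : Prop :=
  forall eps, eps > 0 -> exists M, forall x, x >= M -> Rabs (f x - l) < eps.

Definition lim_minf (f : R -> R) (l : R) : Prop :=
  forall eps, eps > 0 -> exists M, forall x, x <= M -> Rabs (f x - l) < eps.

(* Piecewise continuity: on every bounded interval [a,b] there is a finite
   subdivision a = x_0 < ... < x_n = b such that on each open piece
   (x_i, x_{i+1}) f agrees with a function continuous on [x_i, x_{i+1}]
   (i.e. f is continuous there with finite one-sided limits at the ends). *)
Definition piecewise_continuous (f : R -> R) : Prop :=
  forall a b, a < b ->
    exists (n : nat) (x : nat -> R),
      x 0%nat = a /\ x n = b /\
      (forall i, (i < n)%nat -> x i < x (S i)) /\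
      (forall i, (i < n)%nat ->
         exists g : R -> R,
           (forall t, x i <= t <= x (S i) -> continuity_pt g t) /\
           (forall t, x i < t < x (S i) -> f t = g t)).

Definition integrable_near_pinf (f : R -> R) : Prop :=
  exists M B, forall b, M <= b ->
    exists pr : Riemann_integrable (fun t => Rabs (f t)) M b, RiemannInt pr <= B.

Definition integrable_near_minf (f : R -> R) : Prop :=
  exists M B, forall a, a <= M ->
    exists pr : Riemann_integrable (fun t => Rabs (f t)) a M, RiemannInt pr <= B.

Definition improper_integral_R (f : R -> R) (I : R) : Prop :=
  (forall a b, a <= b -> inhabited (Riemann_integrable f a b)) /\
  forall eps, eps > 0 -> exists M, forall a b, a <= - M -> M <= b ->
    forall pr : Riemann_integrable f a b, Rabs (RiemannInt pr - I) < eps.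

(* u : R -> R (a real or imaginary part) solves u'' + k2 u = 0 in the
   standard (Caratheodory) sense for piecewise continuous k2:
   u is differentiable with derivative du, and
   du(b) - du(a) = - int_a^b k2 u. *)
Definition solves_ode (k2 u du : R -> R) : Prop :=
  (forall x, derivable_pt_lim u x (du x)) /\
  (forall a b, a <= b ->
     exists pr : Riemann_integrable (fun t => k2 t * u t) a b,
       du b - du a = - RiemannInt pr).

From Stdlib Require Import Reals Lra Lia Psatz Classical FunctionalExtensionality.
Open Scope R_scope.

(* Write the complex solution as u = u1 + i u2 and set w_j = u_j / J,
   p_j = (J u_j' - J' u_j) / k_oo.  The "energy" S = (w1^2+w2^2+p1^2+p2^2)/2
   and the Wronskian W = (u1 u2' - u2 u1') / k_oo = w1 p2 - w2 p1 satisfy, on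
   every interval where k^2 is continuous, W' = 0 and S' = -q (w1 p1 + w2 p2),
   with q = J^2/k_oo (k^2 + J''/J) - k_oo/J^2 the integrand of the theorem.
   Lagrange's identity gives S^2 - W^2 >= (w1 p1 + w2 p2)^2, so the function
   G_eps = S + sqrt (S^2 - W^2 + eps) has (ln G_eps)' >= -|q|; gluing the
   pieces of k^2 gives ln G_eps(a) <= ln G_eps(b) + int_a^b |q| for all a <= b.
   The boundary conditions give S -> 1 + R, W -> 1 - R at -oo and S -> T,
   W -> T at +oo (R = |r|^2, T = |tau|^2); for the derivatives this uses the
   integrability of k^2 - k_oo^2 and of |q|.  Hence T = 1 - R and, as
   eps -> 0, 1 + R + 2 sqrt R <= T e^I, which rearranges to T >= sech^2(I/2). *)

(* Derivative rules, phrased with the derivative as an explicit expression so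
   that [derive_tac] can decompose a function syntactically. *)
Lemma Dval f x l l' : derivable_pt_lim f x l -> l = l' -> derivable_pt_lim f x l'.
Proof. intros H ->; exact H. Qed.

Lemma Dext f g x l : (forall y, f y = g y) -> derivable_pt_lim f x l -> derivable_pt_lim g x l.
Proof.
  intros E H eps He. destruct (H eps He) as [d Hd]. exists d. intros h h0 hl.
  rewrite <- !E. apply Hd; auto.
Qed.

Lemma Dplus f g x a b : derivable_pt_lim f x a -> derivable_pt_lim g x b ->
  derivable_pt_lim (fun y => f y + g y) x (a + b).
Proof. intros; apply (derivable_pt_lim_plus f g); auto. Qed.

Lemma Dsub f g x a b : derivable_pt_lim f x a -> derivable_pt_lim g x b ->
  derivable_pt_lim (fun y => f y - g y) x (a - b).
Proof. intros; apply (derivable_pt_lim_minus f g); auto. Qed.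

Lemma Dmult f g x a b : derivable_pt_lim f x a -> derivable_pt_lim g x b ->
  derivable_pt_lim (fun y => f y * g y) x (a * g x + f x * b).
Proof. intros; apply (derivable_pt_lim_mult f g); auto. Qed.

Lemma Dconst c x : derivable_pt_lim (fun _ => c) x 0.
Proof. apply derivable_pt_lim_const. Qed.

Lemma Did x : derivable_pt_lim (fun y => y) x 1.
Proof. apply derivable_pt_lim_id. Qed.

Lemma Dcomp f g x a b : derivable_pt_lim f x a -> derivable_pt_lim g (f x) b ->
  derivable_pt_lim (fun y => g (f y)) x (b * a).
Proof. intros; apply (derivable_pt_lim_comp f g); auto. Qed.

Lemma Ddiv f g x a b : derivable_pt_lim f x a -> derivable_pt_lim g x b -> g x <> 0 ->
  derivable_pt_lim (fun y => f y / g y) x ((a * g x - b * f x) / (g x)^2).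
Proof.
  intros H1 H2 Hn. eapply Dval.
  - apply (Dext (f / g)%F). { intros; reflexivity. }
    apply (derivable_pt_lim_div f g); [exact H1|exact H2|exact Hn].
  - unfold Rsqr; field; auto.
Qed.

Lemma Dsqrt f x a : derivable_pt_lim f x a -> 0 < f x ->
  derivable_pt_lim (fun y => sqrt (f y)) x (a / (2 * sqrt (f x))).
Proof.
  intros H Hp. eapply Dval. apply (Dcomp f sqrt); [exact H|apply derivable_pt_lim_sqrt; auto].
  field. apply Rgt_not_eq, sqrt_lt_R0; auto.
Qed.

Lemma Dln f x a : derivable_pt_lim f x a -> 0 < f x ->
  derivable_pt_lim (fun y => ln (f y)) x (a / f x).
Proof.
  intros H Hp. eapply Dval. apply (Dcomp f ln); [exact H|apply derivable_pt_lim_ln; auto].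
  field. lra.
Qed.

Lemma Dpow2 f x a : derivable_pt_lim f x a -> derivable_pt_lim (fun y => f y ^ 2) x (2 * f x * a).
Proof.
  intros H. eapply Dval.
  - apply (Dext (fun y => f y * f y)); [intros; ring|]. apply (Dmult f f); eauto.
  - ring.
Qed.

Lemma Dcos f x a : derivable_pt_lim f x a -> derivable_pt_lim (fun y => cos (f y)) x (- sin (f x) * a).
Proof. intros H. apply (Dcomp f cos); auto. apply derivable_pt_lim_cos. Qed.

Lemma Dsin f x a : derivable_pt_lim f x a -> derivable_pt_lim (fun y => sin (f y)) x (cos (f x) * a).
Proof. intros H. apply (Dcomp f sin); auto. apply derivable_pt_lim_sin. Qed.

Ltac derive_tac :=
  lazymatch goal with
  | |- derivable_pt_lim (fun _ => ?c) _ _ => apply Dconst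
  | |- derivable_pt_lim (fun y => @?f y + @?g y) _ _ => eapply (Dplus f g); [derive_tac|derive_tac]
  | |- derivable_pt_lim (fun y => @?f y - @?g y) _ _ => eapply (Dsub f g); [derive_tac|derive_tac]
  | |- derivable_pt_lim (fun y => @?f y / @?g y) _ _ => eapply (Ddiv f g); [derive_tac|derive_tac|]
  | |- derivable_pt_lim (fun y => @?f y * @?g y) _ _ => eapply (Dmult f g); [derive_tac|derive_tac]
  | |- derivable_pt_lim (fun y => @?f y ^ 2) _ _ => eapply (Dpow2 f); derive_tac
  | |- derivable_pt_lim (fun y => sqrt (@?f y)) _ _ => eapply (Dsqrt f); [derive_tac|]
  | |- derivable_pt_lim (fun y => ln (@?f y)) _ _ => eapply (Dln f); [derive_tac|]
  | |- derivable_pt_lim (fun y => cos (@?f y)) _ _ => eapply (Dcos f); derive_tac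
  | |- derivable_pt_lim (fun y => sin (@?f y)) _ _ => eapply (Dsin f); derive_tac
  | |- derivable_pt_lim (fun y => y) _ _ => apply Did
  | _ => idtac
  end.

Lemma Cplus f g x : continuity_pt f x -> continuity_pt g x -> continuity_pt (fun y => f y + g y) x.
Proof. intros; exact (continuity_pt_plus f g x H H0). Qed.
Lemma Cminus f g x : continuity_pt f x -> continuity_pt g x -> continuity_pt (fun y => f y - g y) x.
Proof. intros; exact (continuity_pt_minus f g x H H0). Qed.
Lemma Cmult f g x : continuity_pt f x -> continuity_pt g x -> continuity_pt (fun y => f y * g y) x.
Proof. intros; exact (continuity_pt_mult f g x H H0). Qed.
Lemma Cdiv f g x : continuity_pt f x -> continuity_pt g x -> g x <> 0 -> continuity_pt (fun y => f y / g y) x.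
Proof. intros; exact (continuity_pt_div f g x H H0 H1). Qed.
Lemma Cconst c x : continuity_pt (fun _ => c) x.
Proof. apply continuity_pt_const. intros a b; reflexivity. Qed.
Lemma Cpow2 f x : continuity_pt f x -> continuity_pt (fun y => f y ^ 2) x.
Proof.
  intros. replace (fun y => f y ^ 2) with (fun y => f y * f y)
    by (apply functional_extensionality; intros; ring).
  apply Cmult; auto.
Qed.
Lemma Cabs f x : continuity_pt f x -> continuity_pt (fun y => Rabs (f y)) x.
Proof. intros. exact (continuity_pt_comp f Rabs x H (Rcontinuity_abs (f x))). Qed.
Lemma Csqrt f x : continuity_pt f x -> 0 <= f x -> continuity_pt (fun y => sqrt (f y)) x.
Proof. intros H h. exact (continuity_pt_comp f sqrt x H (continuity_pt_sqrt _ h)). Qed.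

Lemma cont_of_D f df x : derivable_pt_lim f x df -> continuity_pt f x.
Proof. intros H. apply derivable_continuous_pt. exists df. exact H. Qed.

Ltac cont_tac :=
  lazymatch goal with
  | |- continuity_pt (fun _ => ?c) _ => apply Cconst
  | |- continuity_pt (fun y => @?f y + @?g y) _ => apply (Cplus f g); [cont_tac|cont_tac]
  | |- continuity_pt (fun y => @?f y - @?g y) _ => apply (Cminus f g); [cont_tac|cont_tac]
  | |- continuity_pt (fun y => @?f y / @?g y) _ => apply (Cdiv f g); [cont_tac|cont_tac|]
  | |- continuity_pt (fun y => @?f y * @?g y) _ => apply (Cmult f g); [cont_tac|cont_tac]
  | |- continuity_pt (fun y => @?f y ^ 2) _ => apply (Cpow2 f); cont_tac
  | |- continuity_pt (fun y => Rabs (@?f y)) _ => apply (Cabs f); cont_tac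
  | |- continuity_pt (fun y => sqrt (@?f y)) _ => apply (Csqrt f); [cont_tac|]
  | |- continuity_pt (fun y => y) _ => apply (cont_of_D _ 1); apply Did
  | _ => idtac
  end.

Lemma mono_deriv F F' a b : a < b ->
  (forall s, a <= s <= b -> derivable_pt_lim F s (F' s)) ->
  (forall s, a < s < b -> 0 <= F' s) -> F a <= F b.
Proof.
  intros hab HD Hpos. destruct (MVT_cor2 F F' a b hab HD) as [c [Hc hc]].
  specialize (Hpos c hc). nra.
Qed.

Lemma const_deriv F a b : a <= b ->
  (forall s, a <= s <= b -> derivable_pt_lim F s 0) -> F a = F b.
Proof.
  intros hab HD. destruct (Req_dec a b) as [->|hne]; [reflexivity|].
  destruct (MVT_cor2 F (fun _ => 0) a b ltac:(lra) HD) as [c [Hc _]]. lra.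
Qed.

Lemma FTC F phi a b : a <= b ->
  (forall s, a <= s <= b -> derivable_pt_lim F s (phi s)) ->
  (forall s, a <= s <= b -> continuity_pt phi s) ->
  forall pr : Riemann_integrable phi a b, RiemannInt pr = F b - F a.
Proof.
  intros hab HD HC pr.
  set (P := primitive hab (FTC_P1 hab HC)).
  rewrite (RiemannInt_P20 hab (FTC_P1 hab HC) pr). fold P.
  assert (E : (fun y => F y - P y) a = (fun y => F y - P y) b).
  { apply (const_deriv (fun y => F y - P y)); auto. intros s Hs. eapply Dval. apply Dsub. apply HD; auto.
    apply (RiemannInt_P28 (f:=phi) (a:=a) (b:=b) (x:=s) hab HC Hs). ring. }
  simpl in E. lra.
Qed.

Lemma RI_nonneg f a b (pr : Riemann_integrable f a b) : a <= b ->
  (forall x, a < x < b -> 0 <= f x) -> 0 <= RiemannInt pr.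
Proof.
  intros hab H. replace 0 with (0 * (b - a)) by ring. rewrite <- (RiemannInt_P15 (RiemannInt_P14 a b 0)).
  apply RiemannInt_P19; auto; intros x hx; unfold fct_cte; auto.
Qed.

Lemma exp_le a b : a <= b -> exp a <= exp b.
Proof. intros [h|h]; [apply Rlt_le, exp_increasing; auto|subst; lra]. Qed.

Lemma le_at_0_of_continuous F H : continuity_pt F 0 -> continuity_pt H 0 ->
  (forall d, 0 < d <= 1 -> F d <= H d) -> F 0 <= H 0.
Proof.
  intros CF CH Hle. apply Rnot_lt_le. intros hlt.
  set (e := (F 0 - H 0) / 2).
  assert (he : e > 0) by (unfold e; lra).
  destruct (CF e he) as [a1 [ha1 Ha1]]. destruct (CH e he) as [a2 [ha2 Ha2]].
  set (d := Rmin 1 (Rmin (a1/2) (a2/2))).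
  assert (hd : 0 < d <= 1).
  { unfold d. split. apply Rmin_glb_lt; [lra|apply Rmin_glb_lt; lra]. apply Rmin_l. }
  assert (hd1 : d <= a1/2) by (unfold d; eapply Rle_trans; [apply Rmin_r|apply Rmin_l]).
  assert (hd2 : d <= a2/2) by (unfold d; eapply Rle_trans; [apply Rmin_r|apply Rmin_r]).
  assert (h1 : Rabs (F d - F 0) < e).
  { apply (Ha1 d). split. unfold D_x, no_cond; split; auto; lra.
    simpl. unfold R_dist. rewrite Rminus_0_r, Rabs_right; lra. }
  assert (h2 : Rabs (H d - H 0) < e).
  { apply (Ha2 d). split. unfold D_x, no_cond; split; auto; lra.
    simpl. unfold R_dist. rewrite Rminus_0_r, Rabs_right; lra. }
  apply Rabs_def2 in h1. apply Rabs_def2 in h2. specialize (Hle d hd). unfold e in *. lra.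
Qed.

(* Limits at +oo (d = true) or -oo (d = false), treated uniformly:
   [beyond d M x] says that x lies past the threshold M in direction d. *)
Definition beyond (d : bool) (M x : R) : Prop := if d then M <= x else x <= M.
Definition eventually (d : bool) (P : R -> Prop) := exists M, forall x, beyond d M x -> P x.

Definition tends0 d f := forall eps, eps > 0 -> eventually d (fun x => Rabs (f x) < eps).
Definition bounded_near d f := exists B, eventually d (fun x => Rabs (f x) <= B).
Definition close d f h := tends0 d (fun x => f x - h x).

Lemma eventually_and d P Q : eventually d P -> eventually d Q -> eventually d (fun x => P x /\ Q x).
Proof.
  intros [M1 H1] [M2 H2]. destruct d; simpl in *.
  - exists (Rmax M1 M2). intros x hx; simpl in hx. pose proof (Rmax_l M1 M2). pose proof (Rmax_r M1 M2).
    split; [apply H1|apply H2]; lra.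
  - exists (Rmin M1 M2). intros x hx; simpl in hx. pose proof (Rmin_l M1 M2). pose proof (Rmin_r M1 M2).
    split; [apply H1|apply H2]; lra.
Qed.

Lemma eventually_mono d (P Q : R -> Prop) : eventually d P -> (forall x, P x -> Q x) -> eventually d Q.
Proof. intros [M H] HPQ. exists M. auto. Qed.

Lemma tends0_of_lim_pinf f l : lim_pinf f l -> tends0 true (fun x => f x - l).
Proof. intros H eps he. destruct (H eps he) as [M HM]. exists M. intros x hx. apply HM. simpl in hx; lra. Qed.

Lemma tends0_of_lim_minf f l : lim_minf f l -> tends0 false (fun x => f x - l).
Proof. intros H eps he. destruct (H eps he) as [M HM]. exists M. intros x hx. apply HM. simpl in hx; lra. Qed.

Lemma tends0_ext d f g : (forall x, f x = g x) -> tends0 d f -> tends0 d g.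
Proof. intros E H eps he. apply (eventually_mono d _ _ (H eps he)). intros x; rewrite E; auto. Qed.

Lemma close_ext d f f' h h' : (forall x, f x = f' x) -> (forall x, h x = h' x) -> close d f h -> close d f' h'.
Proof. intros E1 E2. apply tends0_ext. intros; rewrite E1, E2; auto. Qed.

Lemma bounded_const d c : bounded_near d (fun _ => c).
Proof. exists (Rabs c). exists 0. intros; lra. Qed.

Lemma bounded_mult d f g : bounded_near d f -> bounded_near d g -> bounded_near d (fun x => f x * g x).
Proof.
  intros [B1 H1] [B2 H2]. exists (B1 * B2). apply (eventually_mono d _ _ (eventually_and d _ _ H1 H2)).
  intros x [h1 h2]. rewrite Rabs_mult. apply Rmult_le_compat; auto; apply Rabs_pos.
Qed.

Lemma bounded_close d f h : close d f h -> bounded_near d h -> bounded_near d f.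
Proof.
  intros Hc [B HB]. exists (1 + B).
  apply (eventually_mono d _ _ (eventually_and d _ _ (Hc 1 Rlt_0_1) HB)). intros x [h1 h2].
  replace (f x) with ((f x - h x) + h x) by ring.
  apply Rle_trans with (Rabs (f x - h x) + Rabs (h x)); [apply Rabs_triang|lra].
Qed.

Lemma tends0_plus d f g : tends0 d f -> tends0 d g -> tends0 d (fun x => f x + g x).
Proof.
  intros H1 H2 eps he.
  apply (eventually_mono d _ _ (eventually_and d _ _ (H1 (eps/2) ltac:(lra)) (H2 (eps/2) ltac:(lra)))).
  intros x [h1 h2]. apply Rle_lt_trans with (Rabs (f x) + Rabs (g x)); [apply Rabs_triang|lra].
Qed.

Lemma tends0_mult d f g : tends0 d f -> bounded_near d g -> tends0 d (fun x => f x * g x).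
Proof.
  intros H1 [B HB] eps he.
  set (B' := Rabs B + 1).
  assert (hB' : 0 < B') by (unfold B'; pose proof (Rabs_pos B); lra).
  apply (eventually_mono d _ _ (eventually_and d _ _ (H1 (eps / B') ltac:(apply Rdiv_lt_0_compat; lra)) HB)).
  intros x [h1 h2]. rewrite Rabs_mult.
  assert (Rabs (g x) <= B') by (unfold B'; pose proof (Rle_abs B); lra).
  apply Rle_lt_trans with (Rabs (f x) * B').
  - apply Rmult_le_compat_l; try apply Rabs_pos; lra.
  - replace eps with (eps / B' * B') by (field; lra). apply Rmult_lt_compat_r; lra.
Qed.

Lemma close_plus d f g h1 h2 : close d f h1 -> close d g h2 -> close d (fun x => f x + g x) (fun x => h1 x + h2 x).
Proof.
  intros H1 H2. unfold close. eapply tends0_ext; [|apply (tends0_plus d _ _ H1 H2)].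
  intros; cbv beta; ring.
Qed.

Lemma close_scal d c f h : close d f h -> close d (fun x => c * f x) (fun x => c * h x).
Proof.
  intros H. unfold close. eapply tends0_ext; [|apply (tends0_mult d _ (fun _ => c) H (bounded_const d c))].
  intros; cbv beta; ring.
Qed.

Lemma close_minus d f g h1 h2 : close d f h1 -> close d g h2 -> close d (fun x => f x - g x) (fun x => h1 x - h2 x).
Proof.
  intros H1 H2.
  eapply close_ext; [| |apply (close_plus d _ _ _ _ H1 (close_scal d (-1) _ _ H2))]; intros; cbv beta; ring.
Qed.

Lemma close_mult d f g h1 h2 : close d f h1 -> close d g h2 -> bounded_near d h1 -> bounded_near d h2 ->
  close d (fun x => f x * g x) (fun x => h1 x * h2 x).
Proof.
  intros H1 H2 B1 B2.
  assert (Bf : bounded_near d f) by (apply (bounded_close d f h1); auto).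
  unfold close. eapply tends0_ext; [|apply tends0_plus;
     [apply (tends0_mult d _ _ H2 Bf)|apply (tends0_mult d _ _ H1 B2)]].
  intros; cbv beta; ring.
Qed.

Lemma close_sq d f h : close d f h -> bounded_near d h -> close d (fun x => f x ^ 2) (fun x => h x ^ 2).
Proof.
  intros H B. eapply close_ext; [| |apply (close_mult d _ _ _ _ H H B B)]; intros; cbv beta; ring.
Qed.

Lemma tends0_const d c v : tends0 d (fun _ => c - v) -> c = v.
Proof.
  intros H. destruct (Req_dec c v) as [|hne]; auto. exfalso.
  assert (he : Rabs (c - v) > 0) by (apply Rabs_pos_lt; lra).
  destruct (H _ he) as [M HM].
  specialize (HM M ltac:(destruct d; simpl; lra)). lra.
Qed.

Lemma Rabs_le_bounds a b : Rabs a <= b -> - b <= a <= b.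
Proof. intros h. pose proof (Rle_abs a). pose proof (Rle_abs (- a)). rewrite Rabs_Ropp in *. lra. Qed.

Definition window_beyond (d : bool) M x t := if d then M <= x else t <= M.
Definition farther (d : bool) a b := if d then Rmax a b else Rmin a b.

Lemma window_farther d a b x t : window_beyond d (farther d a b) x t ->
  window_beyond d a x t /\ window_beyond d b x t.
Proof.
  destruct d; simpl; intros h.
  - pose proof (Rmax_l a b); pose proof (Rmax_r a b); split; lra.
  - pose proof (Rmin_l a b); pose proof (Rmin_r a b); split; lra.
Qed.

Lemma window_point d M x t s : x <= s <= t -> window_beyond d M x t -> beyond d M s.
Proof. destruct d; simpl; intros; lra. Qed.

(* If v tends to 0 and the oscillation of v' over unit windows tends to 0,
   then v' tends to 0: by the mean value theorem v' is close to a difference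
   quotient of v over a unit window. *)
Lemma deriv_tends0 d v dv : (forall x, derivable_pt_lim v x (dv x)) -> tends0 d v ->
  (forall eps, eps > 0 -> exists M, forall x t, x <= t <= x + 1 ->
      window_beyond d M x t -> Rabs (dv t - dv x) <= eps) ->
  tends0 d dv.
Proof.
  intros HD Hv Hosc eps he.
  destruct (Hv (eps/3) ltac:(lra)) as [M1 HM1].
  destruct (Hosc (eps/3) ltac:(lra)) as [M2 HM2].
  exists (farther d M1 M2). intros x hx. destruct d; simpl in hx.
  - pose proof (Rmax_l M1 M2); pose proof (Rmax_r M1 M2).
    destruct (MVT_cor2 v dv x (x+1) ltac:(lra) (fun s _ => HD s)) as [c [Hc hc]].
    replace (x + 1 - x) with 1 in Hc by ring.
    assert (a1 := HM1 x ltac:(simpl; lra)). assert (a2 := HM1 (x+1) ltac:(simpl; lra)).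
    assert (a3 := Rabs_le_bounds _ _ (HM2 x c ltac:(lra) ltac:(simpl; lra))).
    apply Rabs_def2 in a1. apply Rabs_def2 in a2. apply Rabs_def1; lra.
  - pose proof (Rmin_l M1 M2); pose proof (Rmin_r M1 M2).
    destruct (MVT_cor2 v dv (x-1) x ltac:(lra) (fun s _ => HD s)) as [c [Hc hc]].
    replace (x - (x - 1)) with 1 in Hc by ring.
    assert (a1 := HM1 x ltac:(simpl; lra)). assert (a2 := HM1 (x-1) ltac:(simpl; lra)).
    assert (a3 := Rabs_le_bounds _ _ (HM2 c x ltac:(lra) ltac:(simpl; lra))).
    apply Rabs_def2 in a1. apply Rabs_def2 in a2. apply Rabs_def1; lra.
Qed.

Lemma lub_approx E L eps : is_lub E L -> eps > 0 -> exists y, E y /\ L - eps < y.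
Proof.
  intros [Hub Hleast] he. apply NNPP; intros hn.
  assert (L <= L - eps); [|lra]. apply Hleast. intros y Ey.
  apply Rnot_lt_le. intros hy. apply hn. exists y; split; auto.
Qed.

Lemma tail_pinf f M0 B :
  (forall b, M0 <= b -> exists pr : Riemann_integrable (fun t => Rabs (f t)) M0 b, RiemannInt pr <= B) ->
  forall eps, eps > 0 -> exists M, forall x t, M <= x <= t ->
    exists pr : Riemann_integrable (fun s => Rabs (f s)) x t, RiemannInt pr <= eps.
Proof.
  intros H eps he.
  set (E := fun y => exists b, M0 <= b /\
              exists pr : Riemann_integrable (fun t => Rabs (f t)) M0 b, y = RiemannInt pr).
  assert (Eb : bound E).
  { exists B. intros y [b [hb [pr ->]]]. destruct (H b hb) as [pr' h]. rewrite (RiemannInt_P5 pr pr'). auto. }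
  assert (Ene : exists y, E y).
  { destruct (H M0 (Rle_refl _)) as [pr _]. exists (RiemannInt pr). exists M0. split; [lra|]. exists pr; auto. }
  destruct (completeness E Eb Ene) as [L HL].
  destruct (lub_approx E L eps HL he) as [y [[b0 [hb0 [pr0 ->]]] hy]].
  exists b0. intros x t [hx ht].
  destruct (H t ltac:(lra)) as [prt _].
  assert (prxt := RiemannInt_P23 prt (conj (Rle_trans _ _ _ hb0 hx) ht)).
  assert (pr0x := RiemannInt_P22 prt (conj (Rle_trans _ _ _ hb0 hx) ht)).
  assert (prbx := RiemannInt_P23 pr0x (conj hb0 hx)).
  exists prxt.
  assert (e1 := RiemannInt_P26 pr0x prxt prt).
  assert (e2 := RiemannInt_P26 pr0 prbx pr0x).
  assert (n1 : 0 <= RiemannInt prbx) by (apply RI_nonneg; auto; intros; apply Rabs_pos).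
  assert (n2 : RiemannInt prt <= L).
  { apply (proj1 HL). exists t. split; [lra|]. exists prt; auto. }
  lra.
Qed.

Lemma tail_minf f M0 B :
  (forall a, a <= M0 -> exists pr : Riemann_integrable (fun t => Rabs (f t)) a M0, RiemannInt pr <= B) ->
  forall eps, eps > 0 -> exists M, forall x t, x <= t <= M ->
    exists pr : Riemann_integrable (fun s => Rabs (f s)) x t, RiemannInt pr <= eps.
Proof.
  intros H eps he.
  set (E := fun y => exists a, a <= M0 /\
              exists pr : Riemann_integrable (fun t => Rabs (f t)) a M0, y = RiemannInt pr).
  assert (Eb : bound E).
  { exists B. intros y [b [hb [pr ->]]]. destruct (H b hb) as [pr' h]. rewrite (RiemannInt_P5 pr pr'). auto. }
  assert (Ene : exists y, E y).
  { destruct (H M0 (Rle_refl _)) as [pr _]. exists (RiemannInt pr). exists M0. split; [lra|]. exists pr; auto. }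
  destruct (completeness E Eb Ene) as [L HL].
  destruct (lub_approx E L eps HL he) as [y [[a0 [ha0 [pr0 ->]]] hy]].
  exists a0. intros x t [hx ht].
  destruct (H x ltac:(lra)) as [prx _].
  assert (prxt := RiemannInt_P22 prx (conj hx (Rle_trans _ _ _ ht ha0))).
  assert (prt0 := RiemannInt_P23 prx (conj hx (Rle_trans _ _ _ ht ha0))).
  assert (prta := RiemannInt_P22 prt0 (conj ht ha0)).
  exists prxt.
  assert (e1 := RiemannInt_P26 prxt prt0 prx).
  assert (e2 := RiemannInt_P26 prta pr0 prt0).
  assert (n1 : 0 <= RiemannInt prta) by (apply RI_nonneg; auto; intros; apply Rabs_pos).
  assert (n2 : RiemannInt prx <= L).
  { apply (proj1 HL). exists x. split; [lra|]. exists prx; auto. }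
  lra.
Qed.

Lemma improper_tail_pinf f I : improper_integral_R f I -> forall eps, eps > 0 ->
  exists M, forall x t, M <= x <= t -> forall pr : Riemann_integrable f x t, RiemannInt pr <= eps.
Proof.
  intros [Hint HI] eps he. destruct (HI (eps/2) ltac:(lra)) as [M HM].
  exists M. intros x t [hx ht] pr.
  set (a := Rmin (- M) x).
  assert (ha1 : a <= - M) by apply Rmin_l. assert (ha2 : a <= x) by apply Rmin_r.
  destruct (Hint a x ha2) as [pr1]. destruct (Hint a t ltac:(lra)) as [pr2].
  assert (e := RiemannInt_P26 pr1 pr pr2).
  assert (h1 := HM a x ha1 hx pr1). assert (h2 := HM a t ha1 ltac:(lra) pr2).
  apply Rabs_def2 in h1. apply Rabs_def2 in h2. lra.
Qed.

Lemma improper_tail_minf f I : improper_integral_R f I -> forall eps, eps > 0 ->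
  exists M, forall x t, x <= t <= M -> forall pr : Riemann_integrable f x t, RiemannInt pr <= eps.
Proof.
  intros [Hint HI] eps he. destruct (HI (eps/2) ltac:(lra)) as [M HM].
  exists (- M). intros x t [hx ht] pr.
  set (b := Rmax M t).
  assert (hb1 : M <= b) by apply Rmax_l. assert (hb2 : t <= b) by apply Rmax_r.
  destruct (Hint t b hb2) as [pr1]. destruct (Hint x b ltac:(lra)) as [pr2].
  assert (e := RiemannInt_P26 pr pr1 pr2).
  assert (h1 := HM t b ltac:(lra) hb1 pr1). assert (h2 := HM x b ltac:(lra) hb1 pr2).
  apply Rabs_def2 in h1. apply Rabs_def2 in h2. lra.
Qed.

Lemma improper_integral_ge f I : improper_integral_R f I -> (forall x, 0 <= f x) ->
  forall a b (pr : Riemann_integrable f a b), a <= b -> RiemannInt pr <= I.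
Proof.
  intros [Hint HI] Hnn a b pr hab.
  apply Rnot_lt_le. intros hlt.
  set (eps := RiemannInt pr - I).
  destruct (HI eps ltac:(unfold eps; lra)) as [M HM].
  set (a' := Rmin a (- M)). set (b' := Rmax b M).
  assert (h1 : a' <= a) by apply Rmin_l. assert (h2 : a' <= - M) by apply Rmin_r.
  assert (h3 : b <= b') by apply Rmax_l. assert (h4 : M <= b') by apply Rmax_r.
  destruct (Hint a' a h1) as [pra]. destruct (Hint b b' h3) as [prb].
  destruct (Hint a' b ltac:(lra)) as [prab]. destruct (Hint a' b' ltac:(lra)) as [prall].
  assert (e1 := RiemannInt_P26 pra pr prab). assert (e2 := RiemannInt_P26 prab prb prall).
  assert (n1 : 0 <= RiemannInt pra) by (apply RI_nonneg; auto).
  assert (n2 : 0 <= RiemannInt prb) by (apply RI_nonneg; auto).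
  assert (hh := HM a' b' h2 h4 prall). apply Rabs_def2 in hh. unfold eps in hh. lra.
Qed.

Definition energy w1 w2 p1 p2 := (w1 ^ 2 + w2 ^ 2 + p1 ^ 2 + p2 ^ 2) / 2.
Definition twist w1 w2 p1 p2 := w1 * p2 - w2 * p1.

(* Lagrange's identity: energy^2 - twist^2 - (w.p)^2 = ((|w|^2 - |p|^2)/2)^2. *)
Lemma energy_lagrange w1 w2 p1 p2 :
  0 <= energy w1 w2 p1 p2 /\
  energy w1 w2 p1 p2 ^ 2 - twist w1 w2 p1 p2 ^ 2 >= (w1 * p1 + w2 * p2) ^ 2.
Proof.
  unfold energy, twist. split; [nra|].
  assert (E : ((w1^2+w2^2+p1^2+p2^2)/2)^2 - (w1*p2 - w2*p1)^2 - (w1*p1 + w2*p2)^2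
    = ((w1^2+w2^2-p1^2-p2^2)/2)^2) by field.
  pose proof (pow2_ge_0 ((w1^2+w2^2-p1^2-p2^2)/2)). lra.
Qed.

(* Pointwise form of (ln G)' >= -|q| for G = S + r, r = sqrt (S^2 - W^2 + eps):
   when S' = -q m and S^2 - W^2 >= m^2, one has (ln G)' = -q m / r >= -|q|. *)
Lemma log_slope_bound S W m q eps : eps > 0 -> 0 <= S -> S^2 - W^2 >= m^2 ->
  0 <= (- q * m) * (1 + S / sqrt (S^2 - W^2 + eps)) / (S + sqrt (S^2 - W^2 + eps)) + Rabs q.
Proof.
  intros he hS hm.
  set (r := sqrt (S^2 - W^2 + eps)).
  assert (hr : 0 < r) by (unfold r; apply sqrt_lt_R0; nra).
  assert (hr2 : r * r = S^2 - W^2 + eps) by (unfold r; apply sqrt_sqrt; nra).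
  assert (hmr : Rabs m <= r).
  { rewrite <- (Rabs_right r) by lra. apply Rsqr_le_abs_0. unfold Rsqr. nra. }
  assert (hq : q * m <= Rabs q * r).
  { apply Rle_trans with (Rabs (q*m)); [apply RRle_abs|]. rewrite Rabs_mult.
    apply Rmult_le_compat_l; auto. apply Rabs_pos. }
  replace ((- q * m) * (1 + S / r) / (S + r)) with (- (q * m) / r) by (field; lra).
  assert (q * m / r <= Rabs q).
  { apply (Rmult_le_reg_r r); auto. unfold Rdiv. rewrite Rmult_assoc, Rinv_l by lra. lra. }
  unfold Rdiv in *. lra.
Qed.

Lemma inv_sq_bound j : 1/2 <= j <= 2 -> Rabs (/ j ^ 2 - j ^ 2) <= 60 * Rabs (j - 1).
Proof.
  intros hj.
  assert (E : / j ^ 2 - j ^ 2 = (1 - j) * ((1 + j) * (1 + j^2) * / j ^ 2)) by (field; lra).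
  rewrite E, Rabs_mult. rewrite <- Rabs_Ropp, Ropp_minus_distr.
  assert (hy : 0 < / j ^ 2 <= 4).
  { split. apply Rinv_0_lt_compat; nra. apply (Rmult_le_reg_l (j^2)); [nra|]. rewrite Rinv_r by nra. nra. }
  rewrite (Rabs_right ((1 + j) * (1 + j ^ 2) * / j ^ 2)).
  - assert ((1 + j) * (1 + j ^ 2) * / j ^ 2 <= 60).
    { assert ((1 + j) * (1 + j ^ 2) <= 15) by nra. nra. }
    pose proof (Rabs_pos (j - 1)). nra.
  - apply Rle_ge. apply Rmult_le_pos; [nra|lra].
Qed.

Lemma gauge_mono a b c dl : 0 <= a <= b -> a + sqrt (a ^ 2 - c + dl) <= b + sqrt (b ^ 2 - c + dl).
Proof.
  intros h. assert (sqrt (a ^ 2 - c + dl) <= sqrt (b ^ 2 - c + dl)) by (apply sqrt_le_1_alt; nra). lra.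
Qed.

(* The closing algebra: with Tp = 1 - Rp and 1 + Rp + 2 sqrt Rp <= Tp e^I, the
   factorization (1-s)(1+s)(z+1)^2 - 4z = ((1-s)z - (1+s)) ((1+s)z - (1-s)),
   s = sqrt Rp, z = e^I, yields Tp >= 4z/(z+1)^2 = sech^2(I/2). *)
Lemma sech_bound Rp Tp I : 0 <= Rp -> Tp = 1 - Rp -> 1 + Rp + sqrt (4 * Rp) <= Tp * exp I ->
  Tp >= 1 / (cosh (I / 2)) ^ 2.
Proof.
  intros hR hT hF.
  set (s := sqrt Rp).
  assert (hs : 0 <= s) by apply sqrt_pos.
  assert (hs2 : s * s = Rp) by (apply sqrt_sqrt; auto).
  assert (h4 : sqrt (4 * Rp) = 2 * s).
  { rewrite sqrt_mult by lra. replace 4 with (2*2) by ring. rewrite sqrt_square by lra. reflexivity. }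
  set (e := exp (I / 2)).
  assert (he : 0 < e) by apply exp_pos.
  set (z := e * e). assert (hzpos : 0 < z) by (unfold z; nra).
  assert (hz : exp I = z).
  { unfold z, e. rewrite <- exp_plus. f_equal. field. }
  assert (hcosh : cosh (I / 2) ^ 2 = (z + 1) ^ 2 / z / 4).
  { unfold cosh. fold e. rewrite exp_Ropp. fold e. unfold z. field. lra. }
  rewrite h4, hz in hF. rewrite hcosh. subst Tp. rewrite <- hs2 in hF |- *.
  assert (hA : 0 < 1 - s).
  { destruct (Rlt_le_dec s 1) as [h|h]; [lra|].
    assert ((1 - s * s) * z <= 0) by (assert (1 - s * s <= 0) by nra; nra). nra. }
  assert (hzA : (1 - s) * z >= 1 + s).
  { apply Rle_ge, (Rmult_le_reg_l (1 + s)); nra. }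
  assert (hzB : (1 + s) * z >= 1 - s) by nra.
  assert (key : (1 - s) * (1 + s) * (z + 1) ^ 2 - 4 * z
                = ((1 - s) * z - (1 + s)) * ((1 + s) * z - (1 - s))) by ring.
  assert (0 <= ((1 - s) * z - (1 + s)) * ((1 + s) * z - (1 - s))) by (apply Rmult_le_pos; lra).
  replace (1 / ((z + 1) ^ 2 / z / 4)) with (4 * z / (z + 1) ^ 2) by (field; nra).
  apply Rle_ge, (Rmult_le_reg_r ((z + 1) ^ 2)); [nra|].
  unfold Rdiv. rewrite Rmult_assoc, Rinv_l by nra. nra.
Qed.

Lemma log_gauge_monotone S W m qf a b eps : a < b -> eps > 0 ->
  (forall s, a <= s <= b -> derivable_pt_lim S s (- qf s * m s)) ->
  (forall s, a <= s <= b -> derivable_pt_lim W s 0) ->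
  (forall s, a <= s <= b -> 0 <= S s /\ S s ^ 2 - W s ^ 2 >= m s ^ 2) ->
  (forall s, a <= s <= b -> continuity_pt (fun y => Rabs (qf y)) s) ->
  forall pr : Riemann_integrable (fun y => Rabs (qf y)) a b,
    ln (S a + sqrt (S a ^ 2 - W a ^ 2 + eps))
    <= ln (S b + sqrt (S b ^ 2 - W b ^ 2 + eps)) + RiemannInt pr.
Proof.
  intros hab heps DS DW Hpos Cq pr.
  assert (hab' : a <= b) by lra.
  set (PQ := primitive hab' (FTC_P1 hab' Cq)).
  set (slope := fun s => (- qf s * m s) * (1 + S s / sqrt (S s ^ 2 - W s ^ 2 + eps))
                     / (S s + sqrt (S s ^ 2 - W s ^ 2 + eps)) + Rabs (qf s)).
  assert (Dlog : forall s, a <= s <= b ->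
    derivable_pt_lim (fun y => ln (S y + sqrt (S y ^ 2 - W y ^ 2 + eps)) + PQ y) s (slope s)).
  { intros s Hs. destruct (Hpos s Hs) as [h1 h2].
    assert (hp : 0 < S s ^ 2 - W s ^ 2 + eps) by nra.
    assert (hr : 0 < sqrt (S s ^ 2 - W s ^ 2 + eps)) by (apply sqrt_lt_R0; lra).
    eapply Dval. derive_tac.
    - apply DS; auto.
    - apply DS; auto.
    - apply DW; auto.
    - exact hp.
    - cbv beta. lra.
    - apply (RiemannInt_P28 (f:=fun y => Rabs (qf y)) (a:=a) (b:=b) (x:=s) hab' Cq Hs).
    - cbv beta. unfold slope. field. lra. }
  assert (Hm := mono_deriv _ slope a b hab Dlog
    ltac:(intros s Hs; destruct (Hpos s ltac:(lra)); apply log_slope_bound; auto)).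
  assert (EPQ : RiemannInt pr = PQ b - PQ a) by apply RiemannInt_P20.
  cbv beta in Hm. lra.
Qed.

(* The scattering data of the theorem. *)
Section Transmission.

Variables (k2 : R -> R) (kinf : R).
Hypothesis Hkinf : kinf > 0.
Hypothesis Hpc : piecewise_continuous k2.
Hypothesis Hintp : integrable_near_pinf (fun x => k2 x - kinf ^ 2).
Hypothesis Hintm : integrable_near_minf (fun x => k2 x - kinf ^ 2).
Variables (u1 u2 du1 du2 : R -> R) (r1 r2 t1 t2 : R).
Hypothesis Hu1 : solves_ode k2 u1 du1.
Hypothesis Hu2 : solves_ode k2 u2 du2.
Hypothesis Hm1 :
  lim_minf (fun x => u1 x - (cos (kinf * x) + r1 * cos (kinf * x) + r2 * sin (kinf * x))) 0.
Hypothesis Hm2 :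
  lim_minf (fun x => u2 x - (sin (kinf * x) + r2 * cos (kinf * x) - r1 * sin (kinf * x))) 0.
Hypothesis Hp1 : lim_pinf (fun x => u1 x - (t1 * cos (kinf * x) - t2 * sin (kinf * x))) 0.
Hypothesis Hp2 : lim_pinf (fun x => u2 x - (t1 * sin (kinf * x) + t2 * cos (kinf * x))) 0.
Variables (J J1 J2 : R -> R).
Hypothesis HJ1 : forall x, derivable_pt_lim J x (J1 x).
Hypothesis HJ2 : forall x, derivable_pt_lim J1 x (J2 x).
Hypothesis HJ2c : continuity J2.
Hypothesis HJpos : forall x, J x > 0.
Hypothesis HJp : lim_pinf J 1.
Hypothesis HJm : lim_minf J 1.
Variable I : R.
Hypothesis HI : improper_integral_R
  (fun x => Rabs (J x ^ 2 / kinf * (k2 x + J2 x / J x) - kinf / J x ^ 2)) I.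

Definition q_of (g : R -> R) x := J x ^ 2 / kinf * (g x + J2 x / J x) - kinf / J x ^ 2.
Definition q := q_of k2.
(* Momentum conjugate to the rescaled amplitude u / J, for a candidate derivative D of u. *)
Definition mom (u D : R -> R) x := (J x * D x - J1 x * u x) / kinf.
Definition en_of D1 D2 x := energy (u1 x / J x) (u2 x / J x) (mom u1 D1 x) (mom u2 D2 x).
Definition wr_of D1 D2 x := (u1 x * D2 x - u2 x * D1 x) / kinf.
(* The product w.p, which multiplies -q in the derivative of the energy. *)
Definition flow_of D1 D2 x := u1 x / J x * mom u1 D1 x + u2 x / J x * mom u2 D2 x.
Definition en := en_of du1 du2.
Definition wr := wr_of du1 du2.
(* Regularized gauge whose logarithm has slope at least -|q|. *)
Definition gauge eps x := en x + sqrt (en x ^ 2 - wr x ^ 2 + eps).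

Lemma J_neq0 x : J x <> 0.
Proof. specialize (HJpos x); lra. Qed.

(* Lagrange's identity, since the Wronskian is the twist of (u/J, mom). *)
Lemma lagrange_of D1 D2 x :
  0 <= en_of D1 D2 x /\ en_of D1 D2 x ^ 2 - wr_of D1 D2 x ^ 2 >= flow_of D1 D2 x ^ 2.
Proof.
  replace (wr_of D1 D2 x) with (twist (u1 x / J x) (u2 x / J x) (mom u1 D1 x) (mom u2 D2 x))
    by (unfold twist, wr_of, mom; field; split; [lra|apply J_neq0]).
  apply energy_lagrange.
Qed.

Lemma en_wr_nonneg x : 0 <= en x /\ en x ^ 2 - wr x ^ 2 >= 0.
Proof.
  destruct (lagrange_of du1 du2 x) as [h1 h2].
  pose proof (pow2_ge_0 (flow_of du1 du2 x)). unfold en, wr. lra.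
Qed.

Lemma du_on_piece (u du : R -> R) (Hu : solves_ode k2 u du) a b g (hab : a <= b)
  (Hg : forall t, a <= t <= b -> continuity_pt g t) (Heq : forall t, a < t < b -> k2 t = g t) :
  exists D : R -> R, (forall s, a <= s <= b -> du s = D s) /\
     (forall s, a <= s <= b -> derivable_pt_lim D s (-(g s * u s))).
Proof.
  assert (C0 : forall t, a <= t <= b -> continuity_pt (fun y => g y * u y) t).
  { intros t Ht. apply (Cmult g u); auto. apply (cont_of_D u (du t)). apply Hu. }
  set (P := primitive hab (FTC_P1 hab C0)).
  assert (HP : forall s (h1 : a <= s) (h2 : s <= b), P s = RiemannInt (FTC_P1 hab C0 h1 h2)).
  { intros s h1 h2. unfold P, primitive. destruct (Rle_dec a s); [|contradiction].
    destruct (Rle_dec s b); [|contradiction]. apply RiemannInt_P5. }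
  exists (fun s => du a - (P s - P a)). split.
  - intros s [h1 h2]. destruct (proj2 Hu a s h1) as [pr Hpr].
    rewrite (HP s h1 h2), (HP a (Rle_refl a) hab), RiemannInt_P9.
    assert (RiemannInt pr = RiemannInt (FTC_P1 hab C0 h1 h2)).
    { apply RiemannInt_P18; auto. intros x Hx. rewrite Heq; auto; lra. }
    lra.
  - intros s Hs. eapply Dval. derive_tac.
    apply (RiemannInt_P28 (f:=fun y => g y * u y) (a:=a) (b:=b) (x:=s) hab C0 Hs).
    ring.
Qed.

Lemma momentum_deriv u D g s : derivable_pt_lim u s (D s) -> derivable_pt_lim D s (-(g s * u s)) ->
  derivable_pt_lim (mom u D) s (-(J s * g s + J2 s) * u s / kinf).
Proof. intros Hu HD. unfold mom. eapply Dval; [derive_tac; eauto; lra|]. field. lra. Qed.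

Lemma energy_laws D1 D2 g s :
  derivable_pt_lim u1 s (D1 s) -> derivable_pt_lim D1 s (-(g s * u1 s)) ->
  derivable_pt_lim u2 s (D2 s) -> derivable_pt_lim D2 s (-(g s * u2 s)) ->
  derivable_pt_lim (en_of D1 D2) s (- q_of g s * flow_of D1 D2 s) /\
  derivable_pt_lim (wr_of D1 D2) s 0.
Proof.
  intros H1 H1' H2 H2'. assert (hk : kinf <> 0) by lra.
  assert (Dm1 := momentum_deriv u1 D1 g s H1 H1').
  assert (Dm2 := momentum_deriv u2 D2 g s H2 H2').
  split.
  - eapply Dval. unfold en_of, energy. derive_tac; eauto; try apply J_neq0.
    cbv beta. unfold q_of, flow_of, mom. field; repeat split; try apply J_neq0; try lra.
  - eapply Dval. unfold wr_of. derive_tac; eauto. cbv beta. field; auto.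
Qed.

Lemma gauge_on_piece a b g (hab : a < b)
  (Hg : forall t, a <= t <= b -> continuity_pt g t) (Heq : forall t, a < t < b -> k2 t = g t) :
  wr a = wr b /\ forall eps, eps > 0 ->
    forall pr : Riemann_integrable (fun x => Rabs (q x)) a b,
      ln (gauge eps a) <= ln (gauge eps b) + RiemannInt pr.
Proof.
  assert (hab' : a <= b) by lra.
  destruct (du_on_piece u1 du1 Hu1 a b g hab' Hg Heq) as [D1 [E1 HD1]].
  destruct (du_on_piece u2 du2 Hu2 a b g hab' Hg Heq) as [D2 [E2 HD2]].
  assert (Laws : forall s, a <= s <= b ->
    derivable_pt_lim (en_of D1 D2) s (- q_of g s * flow_of D1 D2 s) /\ derivable_pt_lim (wr_of D1 D2) s 0).
  { intros s Hs. apply energy_laws; auto; rewrite <- ?E1, <- ?E2 by auto; [apply Hu1|apply Hu2]. }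
  assert (Eq_en : forall s, a <= s <= b -> en s = en_of D1 D2 s).
  { intros s Hs. unfold en, en_of, mom. rewrite E1, E2; auto. }
  assert (Eq_wr : forall s, a <= s <= b -> wr s = wr_of D1 D2 s).
  { intros s Hs. unfold wr, wr_of. rewrite E1, E2; auto. }
  split.
  { rewrite !Eq_wr by lra. apply const_deriv; auto. intros s Hs. apply Laws; auto. }
  intros eps heps pr.
  assert (Cq : forall s, a <= s <= b -> continuity_pt (fun y => Rabs (q_of g y)) s).
  { intros s Hs. unfold q_of. cont_tac; try apply (cont_of_D _ _ _ (HJ1 s));
      auto; try apply J_neq0; try lra.
    apply pow_nonzero, J_neq0. }
  assert (prc := continuity_implies_RiemannInt hab' Cq).
  assert (Hlog := log_gauge_monotone (en_of D1 D2) (wr_of D1 D2) (flow_of D1 D2) (q_of g) a b eps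
    hab heps (fun s Hs => proj1 (Laws s Hs)) (fun s Hs => proj2 (Laws s Hs))
    (fun s _ => lagrange_of D1 D2 s) Cq prc).
  unfold gauge. rewrite !Eq_en, !Eq_wr by lra.
  rewrite (RiemannInt_P18 pr prc hab'); [exact Hlog|].
  intros x Hx. unfold q, q_of. rewrite Heq; auto.
Qed.

Lemma q_integrable a b : a <= b -> inhabited (Riemann_integrable (fun x => Rabs (q x)) a b).
Proof. intros h. exact (proj1 HI a b h). Qed.

Lemma gauge_global a b : a <= b ->
  wr a = wr b /\ forall eps, eps > 0 ->
    forall pr : Riemann_integrable (fun x => Rabs (q x)) a b,
      ln (gauge eps a) <= ln (gauge eps b) + RiemannInt pr.
Proof.
  intros hab. destruct (Req_dec a b) as [<-|hne].
  { split; auto. intros eps he pr. rewrite RiemannInt_P9. lra. }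
  destruct (Hpc a b ltac:(lra)) as [n [x [Hx0 [Hxn [Hinc Hpieces]]]]].
  assert (Upto : forall i, (i <= n)%nat -> a <= x i /\ wr a = wr (x i) /\
      forall eps, eps > 0 -> forall pr : Riemann_integrable (fun t => Rabs (q t)) a (x i),
        ln (gauge eps a) <= ln (gauge eps (x i)) + RiemannInt pr).
  { induction i as [|i IH]; intros hi.
    - rewrite Hx0. split; [lra|]. split; auto. intros eps he pr. rewrite RiemannInt_P9. lra.
    - destruct (IH ltac:(lia)) as [ha [hW hG]].
      assert (hi' : (i < n)%nat) by lia.
      specialize (Hinc i hi'). destruct (Hpieces i hi') as [g [Hg Heq]].
      destruct (gauge_on_piece (x i) (x (S i)) g Hinc Hg Heq) as [pW pG].
      split; [lra|]. split; [congruence|].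
      intros eps he pr.
      destruct (q_integrable a (x i) ha) as [pr1].
      destruct (q_integrable (x i) (x (S i)) ltac:(lra)) as [pr2].
      rewrite <- (RiemannInt_P26 pr1 pr2 pr).
      specialize (hG eps he pr1). specialize (pG eps he pr2). lra. }
  destruct (Upto n (Nat.le_refl n)) as [_ [hW hG]]. rewrite Hxn in hW, hG. auto.
Qed.

Lemma wr_constant x y : wr x = wr y.
Proof.
  destruct (Rle_dec x y) as [h|h].
  - apply (gauge_global x y h).
  - symmetry. apply (gauge_global y x). lra.
Qed.

(* Asymptotics of the derivatives.  The free waves A with A'' = -k_oo^2 A
   compare with u through u'' + k_oo^2 u = -(k^2 - k_oo^2) u. *)

Lemma du_window_estimate u du A dA (Hu : solves_ode k2 u du)
  (HA : forall x, derivable_pt_lim A x (dA x))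
  (HdA : forall x, derivable_pt_lim dA x (- (kinf ^ 2 * A x)))
  x t Bu eta tau : x <= t ->
  (forall s, x <= s <= t -> Rabs (u s) <= Bu) ->
  (forall s, x <= s <= t -> Rabs (u s - A s) <= eta) ->
  forall pr : Riemann_integrable (fun s => Rabs (k2 s - kinf ^ 2)) x t, RiemannInt pr <= tau ->
  Rabs ((du t - dA t) - (du x - dA x)) <= Bu * tau + kinf ^ 2 * eta * (t - x).
Proof.
  intros hxt HB Heta pr Hpr.
  assert (hBu : 0 <= Bu) by (apply Rle_trans with (Rabs (u x)); [apply Rabs_pos|apply HB; lra]).
  destruct (proj2 Hu x t hxt) as [pr1 E1].
  set (phi := fun s => - (kinf ^ 2 * A s)).
  assert (Cphi : forall s, x <= s <= t -> continuity_pt phi s).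
  { intros s _. unfold phi. apply continuity_pt_opp. apply (Cmult (fun _ => kinf ^ 2) A).
    apply Cconst. apply (cont_of_D A (dA s)); auto. }
  assert (prA := continuity_implies_RiemannInt hxt Cphi).
  assert (E2 : RiemannInt prA = dA t - dA x) by (apply FTC; auto).
  assert (prh := RiemannInt_P10 1 pr1 prA).
  assert (E3 := RiemannInt_P13 pr1 prA prh).
  assert (prh2 := RiemannInt_P16 prh).
  assert (E4 := RiemannInt_P17 prh prh2 hxt).
  assert (prB := RiemannInt_P10 Bu (RiemannInt_P14 x t (kinf ^ 2 * eta)) pr).
  assert (E5 := RiemannInt_P13 (RiemannInt_P14 x t (kinf ^ 2 * eta)) pr prB).
  rewrite RiemannInt_P15 in E5.
  assert (E6 : RiemannInt prh2 <= RiemannInt prB).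
  { apply RiemannInt_P19; auto. intros s hs. unfold fct_cte, phi.
    replace (k2 s * u s + 1 * - (kinf ^ 2 * A s))
      with ((k2 s - kinf^2) * u s + kinf^2 * (u s - A s)) by ring.
    eapply Rle_trans; [apply Rabs_triang|].
    rewrite !Rabs_mult, (Rabs_right (kinf^2)) by (apply Rle_ge, pow2_ge_0).
    assert (Rabs (k2 s - kinf ^ 2) * Rabs (u s) <= Rabs (k2 s - kinf ^ 2) * Bu)
      by (apply Rmult_le_compat_l; [apply Rabs_pos|apply HB; lra]).
    assert (kinf ^ 2 * Rabs (u s - A s) <= kinf^2 * eta)
      by (apply Rmult_le_compat_l; [apply pow2_ge_0|apply Heta; lra]).
    lra. }
  assert (Bu * RiemannInt pr <= Bu * tau) by (apply Rmult_le_compat_l; auto).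
  replace ((du t - dA t) - (du x - dA x)) with (- RiemannInt prh) by (rewrite E3, E2; lra).
  rewrite Rabs_Ropp. lra.
Qed.

(* |J''| is controlled by |q|, |k^2 - k_oo^2| and |J^-2 - J^2|, since
   q = J^2 (k^2 - k_oo^2)/k_oo + k_oo (J^2 - J^-2) + J J''/k_oo. *)
Lemma J2_bound s eta : 1/2 <= J s <= 2 -> Rabs (/ J s ^ 2 - J s ^ 2) <= eta ->
  Rabs (J2 s) <= 2 * kinf ^ 2 * eta + 2 * kinf * Rabs (q s) + 2 * Rabs (k2 s - kinf ^ 2).
Proof.
  intros [hj1 hj2] he. set (j := J s) in *.
  assert (hk : kinf <> 0) by lra.
  assert (E : J2 s = (kinf * q s + kinf^2 * (/ j^2 - j^2) - j^2 * (k2 s - kinf^2)) * / j).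
  { unfold q, q_of. fold j. field. split; auto. unfold j; apply J_neq0. }
  rewrite E, Rabs_mult, Rabs_inv, (Rabs_right j) by lra.
  assert (hN : Rabs (kinf * q s + kinf^2 * (/ j^2 - j^2) - j^2 * (k2 s - kinf^2))
     <= kinf * Rabs (q s) + kinf^2 * eta + j^2 * Rabs (k2 s - kinf^2)).
  { unfold Rminus at 2. eapply Rle_trans; [apply Rabs_triang|].
    eapply Rle_trans; [apply Rplus_le_compat_r; apply Rabs_triang|].
    rewrite Rabs_Ropp, !Rabs_mult, (Rabs_right kinf), (Rabs_right (kinf^2)), (Rabs_right (j^2)) by
      (try apply Rle_ge, pow2_ge_0; lra).
    assert (kinf ^ 2 * Rabs (/ j ^ 2 - j ^ 2) <= kinf^2 * eta)
      by (apply Rmult_le_compat_l; auto; apply pow2_ge_0).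
    change (/ j ^ 2 + - j ^ 2) with (/ j ^ 2 - j ^ 2). lra. }
  assert (hjinv : 0 < / j <= 2).
  { split. apply Rinv_0_lt_compat; lra. apply (Rmult_le_reg_l j); [lra|]. rewrite Rinv_r by lra. lra. }
  apply Rle_trans with ((kinf * Rabs (q s) + kinf^2 * eta + j^2 * Rabs (k2 s - kinf^2)) * / j).
  { apply Rmult_le_compat_r; lra. }
  assert (e1 : j^2 * Rabs (k2 s - kinf^2) * / j = j * Rabs (k2 s - kinf^2)) by (field; lra).
  assert (h1 : (kinf * Rabs (q s) + kinf^2 * eta) * / j <= (kinf * Rabs (q s) + kinf^2 * eta) * 2).
  { apply Rmult_le_compat_l; [|lra]. pose proof (Rabs_pos (q s)). pose proof (Rabs_pos (/ j^2 - j^2)). nra. }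
  assert (h2 : j * Rabs (k2 s - kinf^2) <= 2 * Rabs (k2 s - kinf^2)).
  { apply Rmult_le_compat_r; [apply Rabs_pos|lra]. }
  rewrite Rmult_plus_distr_r, e1. lra.
Qed.

Lemma J1_window_estimate x t eta tau tauq : x <= t ->
  (forall s, x <= s <= t -> 1/2 <= J s <= 2 /\ Rabs (/ J s ^ 2 - J s ^ 2) <= eta) ->
  forall pr : Riemann_integrable (fun s => Rabs (k2 s - kinf ^ 2)) x t, RiemannInt pr <= tau ->
  forall prq : Riemann_integrable (fun s => Rabs (q s)) x t, RiemannInt prq <= tauq ->
  Rabs (J1 t - J1 x) <= 2 * kinf ^ 2 * eta * (t - x) + 2 * kinf * tauq + 2 * tau.
Proof.
  intros hxt HJb pr Hpr prq Hprq.
  assert (pr2 := continuity_implies_RiemannInt hxt (fun s _ => HJ2c s)).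
  assert (E1 : RiemannInt pr2 = J1 t - J1 x) by (apply FTC; auto).
  assert (pr2a := RiemannInt_P16 pr2).
  assert (E2 := RiemannInt_P17 pr2 pr2a hxt).
  assert (prk := RiemannInt_P10 (2 * kinf) (RiemannInt_P14 x t (2 * kinf ^ 2 * eta)) prq).
  assert (Ek := RiemannInt_P13 (RiemannInt_P14 x t (2 * kinf ^ 2 * eta)) prq prk).
  assert (prB := RiemannInt_P10 2 prk pr).
  assert (EB := RiemannInt_P13 prk pr prB).
  rewrite RiemannInt_P15 in Ek.
  assert (E3 : RiemannInt pr2a <= RiemannInt prB).
  { apply RiemannInt_P19; auto. intros s hs. unfold fct_cte.
    destruct (HJb s ltac:(lra)) as [h1 h2]. apply J2_bound; auto. }
  rewrite <- E1. nra.
Qed.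

Lemma k2_tail d : forall eps, eps > 0 -> exists M, forall x t, x <= t -> window_beyond d M x t ->
  exists pr : Riemann_integrable (fun s => Rabs (k2 s - kinf ^ 2)) x t, RiemannInt pr <= eps.
Proof.
  intros eps he. destruct d.
  - destruct Hintp as [M0 [B HB]].
    destruct (tail_pinf (fun x => k2 x - kinf ^ 2) M0 B HB eps he) as [M HM].
    exists M. intros x t hxt hp. apply HM. simpl in hp. lra.
  - destruct Hintm as [M0 [B HB]].
    destruct (tail_minf (fun x => k2 x - kinf ^ 2) M0 B HB eps he) as [M HM].
    exists M. intros x t hxt hp. apply HM. simpl in hp. lra.
Qed.

Lemma q_tail d : forall eps, eps > 0 -> exists M, forall x t, x <= t -> window_beyond d M x t ->
  forall pr : Riemann_integrable (fun s => Rabs (q s)) x t, RiemannInt pr <= eps.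
Proof.
  intros eps he. destruct d.
  - destruct (improper_tail_pinf _ _ HI eps he) as [M HM].
    exists M. intros x t hxt hp pr. apply HM. simpl in hp. lra.
  - destruct (improper_tail_minf _ _ HI eps he) as [M HM].
    exists M. intros x t hxt hp pr. apply HM. simpl in hp. lra.
Qed.

Lemma du_close d u du A dA BA (Hu : solves_ode k2 u du)
  (HA : forall x, derivable_pt_lim A x (dA x))
  (HdA : forall x, derivable_pt_lim dA x (- (kinf ^ 2 * A x)))
  (HAb : forall x, Rabs (A x) <= BA) :
  close d u A -> close d du dA.
Proof.
  intros Hcl. apply (deriv_tends0 d (fun x => u x - A x)); auto.
  { intros x. apply (Dsub u A). apply Hu. apply HA. }
  intros eps he.
  assert (hBA : 0 <= BA) by (apply Rle_trans with (Rabs (A 0)); [apply Rabs_pos|auto]).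
  set (Bu := BA + 1).
  assert (hk2 : 0 <= kinf ^ 2) by apply pow2_ge_0.
  destruct (k2_tail d (eps / (2 * Bu)) ltac:(apply Rdiv_lt_0_compat; unfold Bu; lra)) as [M1 HM1].
  set (eta := Rmin 1 (eps / (2 * (kinf ^ 2 + 1)))).
  assert (heta1 : eta <= 1) by apply Rmin_l.
  assert (heta2 : eta <= eps / (2 * (kinf ^ 2 + 1))) by apply Rmin_r.
  assert (heta : 0 < eta).
  { unfold eta. apply Rmin_glb_lt; [lra|]. apply Rdiv_lt_0_compat; lra. }
  destruct (Hcl eta heta) as [M2 HM2].
  exists (farther d M1 M2). intros x t hxt hp.
  destruct (window_farther d M1 M2 x t hp) as [hp1 hp2].
  destruct (HM1 x t ltac:(lra) hp1) as [pr hpr].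
  assert (Hs : forall s, x <= s <= t -> Rabs (u s - A s) <= eta).
  { intros s hs. apply Rlt_le, HM2. apply (window_point d M2 x t s hs hp2). }
  assert (HB : forall s, x <= s <= t -> Rabs (u s) <= Bu).
  { intros s hs. specialize (Hs s hs). specialize (HAb s).
    replace (u s) with ((u s - A s) + A s) by ring.
    eapply Rle_trans; [apply Rabs_triang|]. unfold Bu. lra. }
  eapply Rle_trans; [exact (du_window_estimate u du A dA Hu HA HdA x t Bu eta _ ltac:(lra) HB Hs pr hpr)|].
  assert (e1 : Bu * (eps / (2 * Bu)) = eps / 2) by (field; unfold Bu; lra).
  assert (e2 : kinf ^ 2 * eta * (t - x) <= eps / 2).
  { assert (kinf ^ 2 * eta <= kinf ^ 2 * (eps / (2 * (kinf ^ 2 + 1))))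
      by (apply Rmult_le_compat_l; lra).
    assert (kinf ^ 2 * (eps / (2 * (kinf ^ 2 + 1))) <= eps / 2).
    { replace (kinf ^ 2 * (eps / (2 * (kinf ^ 2 + 1))))
        with (eps / 2 - eps / (2 * (kinf ^ 2 + 1))) by (field; lra).
      assert (0 < eps / (2 * (kinf ^ 2 + 1))) by (apply Rdiv_lt_0_compat; lra). lra. }
    assert (0 <= kinf ^ 2 * eta) by nra. nra. }
  lra.
Qed.

Lemma J1_tends0 d : tends0 d (fun x => J x - 1) -> tends0 d J1.
Proof.
  intros HJl. apply (deriv_tends0 d (fun x => J x - 1)); auto.
  { intros x. eapply Dval. derive_tac. apply HJ1. ring. }
  intros eps he.
  assert (hk2 : 0 < kinf ^ 2) by (apply pow_lt; lra).
  set (eta := eps / (6 * kinf ^ 2)).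
  assert (heta : 0 < eta) by (unfold eta; apply Rdiv_lt_0_compat; lra).
  set (del := Rmin (1/2) (eta / 60)).
  assert (hdel : 0 < del) by (unfold del; apply Rmin_glb_lt; lra).
  destruct (k2_tail d (eps / 6) ltac:(lra)) as [M1 HM1].
  destruct (q_tail d (eps / (6 * kinf)) ltac:(apply Rdiv_lt_0_compat; lra)) as [M2 HM2].
  destruct (HJl del hdel) as [M3 HM3].
  exists (farther d M1 (farther d M2 M3)). intros x t hxt hp.
  destruct (window_farther d _ _ x t hp) as [hp1 hp'].
  destruct (window_farther d _ _ x t hp') as [hp2 hp3].
  destruct (HM1 x t ltac:(lra) hp1) as [pr hpr].
  destruct (q_integrable x t ltac:(lra)) as [prq].
  assert (hprq := HM2 x t ltac:(lra) hp2 prq).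
  assert (Hb : forall s, x <= s <= t -> 1/2 <= J s <= 2 /\ Rabs (/ J s ^ 2 - J s ^ 2) <= eta).
  { intros s hs. assert (h := HM3 s (window_point d M3 x t s hs hp3)). cbv beta in h.
    assert (del <= 1/2) by apply Rmin_l. assert (del <= eta / 60) by apply Rmin_r.
    apply Rabs_def2 in h as hh.
    assert (hJ : 1/2 <= J s <= 2) by lra. split; auto.
    eapply Rle_trans; [apply inv_sq_bound; auto|]. lra. }
  eapply Rle_trans; [exact (J1_window_estimate x t eta _ _ ltac:(lra) Hb pr hpr prq hprq)|].
  replace (2 * kinf ^ 2 * eta) with (eps / 3) by (unfold eta; field; lra).
  replace (2 * kinf * (eps / (6 * kinf))) with (eps / 3) by (field; lra).
  nra.
Qed.

Lemma inv_J_close d : tends0 d (fun x => J x - 1) -> close d (fun x => / J x) (fun _ => 1).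
Proof.
  intros HJl. destruct (HJl (1/2) ltac:(lra)) as [M HM].
  assert (bI : bounded_near d (fun x => / J x)).
  { exists 2. exists M. intros x hx. specialize (HM x hx). apply Rabs_def2 in HM.
    rewrite Rabs_right by (apply Rle_ge, Rlt_le, Rinv_0_lt_compat; lra).
    apply (Rmult_le_reg_l (J x)); [lra|]. rewrite Rinv_r by lra. lra. }
  eapply tends0_ext;
    [|exact (tends0_mult d _ _ (tends0_mult d _ _ HJl bI) (bounded_const d (-1)))].
  intros x; cbv beta. field. apply J_neq0.
Qed.

Definition wave a b x := a * cos (kinf * x) + b * sin (kinf * x).
Definition dwave a b x := kinf * (b * cos (kinf * x) - a * sin (kinf * x)).

Lemma D_wave a b x : derivable_pt_lim (wave a b) x (dwave a b x).
Proof. unfold wave, dwave. eapply Dval. derive_tac. ring. Qed.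

Lemma D_dwave a b x : derivable_pt_lim (dwave a b) x (- (kinf ^ 2 * wave a b x)).
Proof. unfold wave, dwave. eapply Dval. derive_tac. ring. Qed.

Lemma wave_bound a b x : Rabs (wave a b x) <= Rabs a + Rabs b.
Proof.
  unfold wave. eapply Rle_trans; [apply Rabs_triang|]. rewrite !Rabs_mult.
  assert (Rabs (cos (kinf * x)) <= 1) by (apply Rabs_le; apply COS_bound).
  assert (Rabs (sin (kinf * x)) <= 1) by (apply Rabs_le; apply SIN_bound).
  pose proof (Rabs_pos a); pose proof (Rabs_pos b).
  pose proof (Rabs_pos (cos (kinf * x))); pose proof (Rabs_pos (sin (kinf * x))). nra.
Qed.

Lemma bounded_wave d a b : bounded_near d (wave a b).
Proof. exists (Rabs a + Rabs b). exists 0. intros; apply wave_bound. Qed.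

Lemma bounded_dwave d a b : bounded_near d (dwave a b).
Proof.
  exists (Rabs (kinf * b) + Rabs (- (kinf * a))). exists 0. intros x _.
  replace (dwave a b x) with (wave (kinf * b) (- (kinf * a)) x) by (unfold wave, dwave; ring).
  apply wave_bound.
Qed.

Lemma wave_energy a b x : wave a b x ^ 2 + (dwave a b x / kinf) ^ 2 = a ^ 2 + b ^ 2.
Proof.
  unfold wave, dwave. pose proof (sin2_cos2 (kinf * x)) as h. unfold Rsqr in h.
  transitivity ((a ^ 2 + b ^ 2) * (sin (kinf * x) * sin (kinf * x) + cos (kinf * x) * cos (kinf * x)));
    [field; lra|rewrite h; ring].
Qed.

Lemma wave_wronskian a1 b1 a2 b2 x :
  (wave a1 b1 x * dwave a2 b2 x - wave a2 b2 x * dwave a1 b1 x) / kinf = a1 * b2 - a2 * b1.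
Proof.
  unfold wave, dwave. pose proof (sin2_cos2 (kinf * x)) as h. unfold Rsqr in h.
  transitivity ((a1 * b2 - a2 * b1) * (sin (kinf * x) * sin (kinf * x) + cos (kinf * x) * cos (kinf * x)));
    [field; lra|rewrite h; ring].
Qed.

Lemma du_close_wave d u du a b :
  solves_ode k2 u du -> close d u (wave a b) -> close d du (dwave a b).
Proof.
  intros Hu cu. apply (du_close d u du (wave a b) (dwave a b) (Rabs a + Rabs b)); auto.
  - apply D_wave.
  - apply D_dwave.
  - apply wave_bound.
Qed.

Lemma phase_close d u du a b : solves_ode k2 u du -> close d u (wave a b) ->
  tends0 d (fun x => J x - 1) ->
  close d (fun x => u x / J x) (wave a b) /\ close d (mom u du) (fun x => dwave a b x / kinf).
Proof.
  intros Hu cu HJl.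
  assert (cdu := du_close_wave d u du a b Hu cu).
  assert (cJ : close d J (fun _ => 1)) by exact HJl.
  assert (cJ1 : close d J1 (fun _ => 0)).
  { eapply tends0_ext; [|exact (J1_tends0 d HJl)]. intros; cbv beta; ring. }
  split.
  - eapply close_ext;
      [| |exact (close_mult d _ _ _ _ cu (inv_J_close d HJl) (bounded_wave d a b) (bounded_const d 1))];
      intros; cbv beta; [reflexivity|ring].
  - assert (h := close_scal d (/ kinf) _ _ (close_minus d _ _ _ _
       (close_mult d _ _ _ _ cJ cdu (bounded_const d 1) (bounded_dwave d a b))
       (close_mult d _ _ _ _ cJ1 cu (bounded_const d 0) (bounded_wave d a b)))).
    eapply close_ext; [| |exact h]; intros; unfold mom; cbv beta; field; lra.
Qed.

Lemma boundary_limits d a1 b1 a2 b2 :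
  close d u1 (wave a1 b1) -> close d u2 (wave a2 b2) -> tends0 d (fun x => J x - 1) ->
  tends0 d (fun x => en x - (a1 ^ 2 + b1 ^ 2 + a2 ^ 2 + b2 ^ 2) / 2) /\
  tends0 d (fun x => wr x - (a1 * b2 - a2 * b1)).
Proof.
  intros c1 c2 HJl.
  assert (hk : kinf <> 0) by lra.
  destruct (phase_close d u1 du1 a1 b1 Hu1 c1 HJl) as [cw1 cp1].
  destruct (phase_close d u2 du2 a2 b2 Hu2 c2 HJl) as [cw2 cp2].
  assert (cd1 := du_close_wave d u1 du1 a1 b1 Hu1 c1).
  assert (cd2 := du_close_wave d u2 du2 a2 b2 Hu2 c2).
  assert (bp : forall a b, bounded_near d (fun x => dwave a b x / kinf)).
  { intros a b. apply (bounded_mult d (dwave a b) (fun _ => / kinf)); [apply bounded_dwave|apply bounded_const]. }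
  split.
  - assert (cS := close_scal d (/ 2) _ _ (close_plus d _ _ _ _ (close_plus d _ _ _ _ (close_plus d _ _ _ _
       (close_sq d _ _ cw1 (bounded_wave d a1 b1)) (close_sq d _ _ cw2 (bounded_wave d a2 b2)))
       (close_sq d _ _ cp1 (bp a1 b1))) (close_sq d _ _ cp2 (bp a2 b2)))).
    eapply close_ext; [| |exact cS]; intros x; cbv beta.
    + unfold en, en_of, energy. lra.
    + pose proof (wave_energy a1 b1 x). pose proof (wave_energy a2 b2 x). lra.
  - assert (cW := close_scal d (/ kinf) _ _ (close_minus d _ _ _ _
       (close_mult d _ _ _ _ c1 cd2 (bounded_wave d a1 b1) (bounded_dwave d a2 b2))
       (close_mult d _ _ _ _ c2 cd1 (bounded_wave d a2 b2) (bounded_dwave d a1 b1)))).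
    eapply close_ext; [| |exact cW]; intros x; cbv beta.
    + unfold wr, wr_of. field. lra.
    + rewrite <- (wave_wronskian a1 b1 a2 b2 x). field. lra.
Qed.

Lemma limits_pinf :
  tends0 true (fun x => en x - (t1 ^ 2 + t2 ^ 2)) /\ tends0 true (fun x => wr x - (t1 ^ 2 + t2 ^ 2)).
Proof.
  destruct (boundary_limits true t1 (- t2) t2 t1) as [HS HW].
  - eapply tends0_ext; [|apply (tends0_of_lim_pinf _ _ Hp1)]. intros x; unfold wave; cbv beta; ring.
  - eapply tends0_ext; [|apply (tends0_of_lim_pinf _ _ Hp2)]. intros x; unfold wave; cbv beta; ring.
  - apply (tends0_of_lim_pinf _ _ HJp).
  - split; eapply tends0_ext; [| exact HS | | exact HW]; intros x; cbv beta; field.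
Qed.

Lemma limits_minf :
  tends0 false (fun x => en x - (1 + (r1 ^ 2 + r2 ^ 2))) /\
  tends0 false (fun x => wr x - (1 - (r1 ^ 2 + r2 ^ 2))).
Proof.
  destruct (boundary_limits false (1 + r1) r2 r2 (1 - r1)) as [HS HW].
  - eapply tends0_ext; [|apply (tends0_of_lim_minf _ _ Hm1)]. intros x; unfold wave; cbv beta; ring.
  - eapply tends0_ext; [|apply (tends0_of_lim_minf _ _ Hm2)]. intros x; unfold wave; cbv beta; ring.
  - apply (tends0_of_lim_minf _ _ HJm).
  - split; eapply tends0_ext; [| exact HS | | exact HW]; intros x; cbv beta; field.
Qed.

Lemma flux_conservation : forall x, wr x = t1 ^ 2 + t2 ^ 2 /\ t1 ^ 2 + t2 ^ 2 = 1 - (r1 ^ 2 + r2 ^ 2).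
Proof.
  intros x.
  assert (HT : wr x = t1 ^ 2 + t2 ^ 2).
  { apply (tends0_const true). eapply tends0_ext; [|exact (proj2 limits_pinf)].
    intros y; cbv beta. rewrite (wr_constant y x). reflexivity. }
  assert (HR : wr x = 1 - (r1 ^ 2 + r2 ^ 2)).
  { apply (tends0_const false). eapply tends0_ext; [|exact (proj2 limits_minf)].
    intros y; cbv beta. rewrite (wr_constant y x). reflexivity. }
  split; lra.
Qed.

Lemma regularized_bound dl : 0 < dl <= 1 ->
  let Tp := t1 ^ 2 + t2 ^ 2 in let Rp := r1 ^ 2 + r2 ^ 2 in
  (1 + Rp - dl) + sqrt ((1 + Rp - dl) ^ 2 - Tp ^ 2 + dl)
  <= ((Tp + dl) + sqrt ((Tp + dl) ^ 2 - Tp ^ 2 + dl)) * exp I.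
Proof.
  intros hdl Tp Rp.
  assert (hR : 0 <= Rp) by (unfold Rp; pose proof (pow2_ge_0 r1); pose proof (pow2_ge_0 r2); lra).
  destruct (proj1 limits_minf dl ltac:(lra)) as [M1 HM1].
  destruct (proj1 limits_pinf dl ltac:(lra)) as [M2 HM2].
  set (y := Rmax M1 M2).
  assert (hxy : M1 <= y) by apply Rmax_l.
  assert (hx := HM1 M1 ltac:(simpl; lra)). assert (hy := HM2 y ltac:(simpl; apply Rmax_r)).
  apply Rabs_def2 in hx. apply Rabs_def2 in hy. fold Rp in hx. fold Tp in hy.
  destruct (q_integrable M1 y hxy) as [pr].
  assert (Hg := proj2 (gauge_global M1 y hxy) dl ltac:(lra) pr).
  assert (HIb : RiemannInt pr <= I).
  { apply (improper_integral_ge _ I HI); auto. intros; apply Rabs_pos. }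
  assert (Gpos : forall x, 0 < gauge dl x).
  { intros x. destruct (en_wr_nonneg x). unfold gauge.
    assert (0 < sqrt (en x ^ 2 - wr x ^ 2 + dl)) by (apply sqrt_lt_R0; lra). lra. }
  assert (Gxy : gauge dl M1 <= gauge dl y * exp I).
  { apply exp_le in Hg. rewrite exp_ln in Hg by auto. rewrite exp_plus, exp_ln in Hg by auto.
    eapply Rle_trans; [exact Hg|]. apply Rmult_le_compat_l; [apply Rlt_le, Gpos|]. apply exp_le; auto. }
  assert (F1 : (1 + Rp - dl) + sqrt ((1 + Rp - dl) ^ 2 - Tp ^ 2 + dl) <= gauge dl M1).
  { unfold gauge. rewrite (proj1 (flux_conservation M1)). apply gauge_mono. lra. }
  assert (F2 : gauge dl y <= (Tp + dl) + sqrt ((Tp + dl) ^ 2 - Tp ^ 2 + dl)).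
  { unfold gauge. rewrite (proj1 (flux_conservation y)). apply gauge_mono.
    pose proof (proj1 (en_wr_nonneg y)). lra. }
  pose proof (exp_pos I). nra.
Qed.

Lemma transmission_lower_bound : t1 ^ 2 + t2 ^ 2 >= 1 / (cosh (I / 2)) ^ 2.
Proof.
  set (Tp := t1 ^ 2 + t2 ^ 2). set (Rp := r1 ^ 2 + r2 ^ 2).
  assert (hR : 0 <= Rp) by (unfold Rp; pose proof (pow2_ge_0 r1); pose proof (pow2_ge_0 r2); lra).
  assert (HTR : Tp = 1 - Rp) by exact (proj2 (flux_conservation 0)).
  assert (HL := le_at_0_of_continuous
    (fun dl => (1 + Rp - dl) + sqrt ((1 + Rp - dl) ^ 2 - Tp ^ 2 + dl))
    (fun dl => ((Tp + dl) + sqrt ((Tp + dl) ^ 2 - Tp ^ 2 + dl)) * exp I)).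
  cbv beta in HL.
  replace ((1 + Rp - 0) ^ 2 - Tp ^ 2 + 0) with (4 * Rp) in HL by (rewrite HTR; ring).
  replace ((Tp + 0) ^ 2 - Tp ^ 2 + 0) with 0 in HL by ring.
  rewrite sqrt_0 in HL.
  apply (sech_bound Rp Tp I); auto.
  enough (1 + Rp - 0 + sqrt (4 * Rp) <= (Tp + 0 + 0) * exp I) by lra.
  apply HL.
  - cont_tac. rewrite HTR. nra.
  - cont_tac. nra.
  - exact regularized_bound.
Qed.

End Transmission.

Theorem mainTheorem9
  (k2 : R -> R) (kinf : R)
  (Hkinf : kinf > 0)
  (Hpc : piecewise_continuous k2)
  (Hlimp : lim_pinf k2 (kinf ^ 2))
  (Hlimm : lim_minf k2 (kinf ^ 2))
  (Hintp : integrable_near_pinf (fun x => k2 x - kinf ^ 2))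
  (Hintm : integrable_near_minf (fun x => k2 x - kinf ^ 2))
  (u1 u2 du1 du2 : R -> R) (r1 r2 t1 t2 : R)
  (Hu1 : solves_ode k2 u1 du1)
  (Hu2 : solves_ode k2 u2 du2)
  (Hm1 : lim_minf (fun x => u1 x - (cos (kinf * x) + r1 * cos (kinf * x) + r2 * sin (kinf * x))) 0)
  (Hm2 : lim_minf (fun x => u2 x - (sin (kinf * x) + r2 * cos (kinf * x) - r1 * sin (kinf * x))) 0)
  (Hp1 : lim_pinf (fun x => u1 x - (t1 * cos (kinf * x) - t2 * sin (kinf * x))) 0)
  (Hp2 : lim_pinf (fun x => u2 x - (t1 * sin (kinf * x) + t2 * cos (kinf * x))) 0)
  (J J1 J2 : R -> R)
  (HJ1 : forall x, derivable_pt_lim J x (J1 x))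
  (HJ2 : forall x, derivable_pt_lim J1 x (J2 x))
  (HJ2c : continuity J2)
  (HJpos : forall x, J x > 0)
  (HJp : lim_pinf J 1)
  (HJm : lim_minf J 1)
  (I : R)
  (HI : improper_integral_R
          (fun x => Rabs (J x ^ 2 / kinf * (k2 x + J2 x / J x) - kinf / J x ^ 2)) I) :
  t1 ^ 2 + t2 ^ 2 >= 1 / (cosh (I / 2)) ^ 2.
Proof.
  exact (transmission_lower_bound k2 kinf Hkinf Hpc Hintp Hintm u1 u2 du1 du2 r1 r2 t1 t2
    Hu1 Hu2 Hm1 Hm2 Hp1 Hp2 J J1 J2 HJ1 HJ2 HJ2c HJpos HJp HJm I HI).
Qed.
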